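(* For all integers $r,q\ge1$, every $(3,2r)$-modular variety is $(2^{q+1}-1,\,2r^q)$-modular.
   Context: $\circ$ denotes relational composition, juxtaposition denotes intersection. For relations $X,Y$ and $m\ge1$, $X\circ_m Y$ denotes $X\circ Y\circ X\circ\cdots$ with $m$ factors. For $m\ge3$, a variety $\mathcal V$ is $(m,k)$-modular if every algebra in $\mathcal V$ satisfies $\alpha(\beta\circ_m\alpha\gamma)\subseteq\alpha\beta\circ_k\alpha\gamma$ for all congruences $\alpha,\beta,\gamma$. *)

From mathcomp Require Import all_boot.
Set Implicit Arguments. Unset Strict Implicit. Unset Printing Implicit Defensive.

Record signature := Signature {
  opsym : Type;
  arity : opsym -> nat
}.

Record algebra (S : signature) := Algebra {
  carrier :> Type;
  op : forall f : opsym S, ('I_(arity f) -> carrier) -> carrier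
}.

Inductive term (S : signature) : Type :=
| Var : nat -> term S
| App : forall f : opsym S, ('I_(arity f) -> term S) -> term S.

Fixpoint eval (S : signature) (A : algebra S) (v : nat -> A) (t : term S) : A :=
  match t with
  | Var n => v n
  | App f ts => @op S A f (fun i => eval v (ts i))
  end.

Definition identity (S : signature) := (term S * term S)%type.

Definition satisfies (S : signature) (A : algebra S) (e : identity S) : Prop :=
  forall v : nat -> A, eval v e.1 = eval v e.2.

(* A variety is an equational class: the variety defined by a set of
   identities Sigma consists of all S-algebras satisfying every identity
   of Sigma (Birkhoff's HSP theorem). *)
Definition in_variety (S : signature) (Sigma : identity S -> Prop)
  (A : algebra S) : Prop :=
  forall e, Sigma e -> satisfies A e.

Definition relation (T : Type) := T -> T -> Prop.

Definition rcomp (T : Type) (X Y : relation T) : relation T :=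
  fun x z => exists y, X x y /\ Y y z.

(* intersection (written as juxtaposition in the paper) *)
Definition rmeet (T : Type) (X Y : relation T) : relation T :=
  fun x y => X x y /\ Y x y.

(* X ∘_m Y = X ∘ Y ∘ X ∘ ... with m factors (m >= 1);
   for m = 0 we put the diagonal (never used). *)
Fixpoint altcomp (T : Type) (X Y : relation T) (m : nat) : relation T :=
  match m with
  | 0 => fun x y => x = y
  | 1 => X
  | m'.+1 => rcomp X (altcomp Y X m')
  end.

Definition rsubset (T : Type) (X Y : relation T) : Prop :=
  forall x y, X x y -> Y x y.

Definition is_congruence (S : signature) (A : algebra S) (R : relation A) : Prop :=
  [/\ (forall x, R x x),
      (forall x y, R x y -> R y x),
      (forall x y z, R x y -> R y z -> R x z) &
      (forall (f : opsym S) (a b : 'I_(arity f) -> A),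
          (forall i, R (a i) (b i)) -> R (@op S A f a) (@op S A f b))].

Definition mk_modular (S : signature) (Sigma : identity S -> Prop) (m k : nat) : Prop :=
  forall A : algebra S, in_variety Sigma A ->
  forall alpha beta gamma : relation A,
    is_congruence alpha -> is_congruence beta -> is_congruence gamma ->
    rsubset (rmeet alpha (altcomp beta (rmeet alpha gamma) m))
            (altcomp (rmeet alpha beta) (rmeet alpha gamma) k).

From mathcomp Require Import all_boot zify.
From Stdlib Require Import FunctionalExtensionality ProofIrrelevance IndefiniteDescription.
From Stdlib Require Import RelationClasses.
Set Implicit Arguments. Unset Strict Implicit.

(* Write 2^(q+2)-1 = 4l+3 with l+1 = 2^q, and let
   R := beta o_(l+1) alpha.gamma, a compatible relation.  A chain
   x beta ... y of length 4l+3 with x alpha y has a middle alpha.gamma-step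
   z -> w, and the quarters around it give points e, e' with x, z R e and
   w, y R e'.  In the subalgebra R of A x A, with beta' the kernel of the
   second projection, (x,e) beta' (z,e) alpha.gamma (w,e') beta' (y,e'), so
   (3,2r)-modularity yields a 2r-step alpha.beta'/alpha.gamma chain from
   (x,e) to (y,e').  Projected to A, each alpha.beta'-step joins two
   alpha-related elements with a common R-partner, hence by a chain of length
   2l+1 = 2^(q+1)-1, which the induction hypothesis turns into 2r^q steps. *)

Section Chains.
Variable T : Type.
Implicit Types (X Y : relation T) (f : nat -> T).

Definition alt X Y (i : nat) : relation T := if odd i then Y else X.

Definition walk X Y f n := forall i, i < n -> alt X Y i (f i) (f i.+1).

Definition chain X Y n x y := exists f, [/\ f 0 = x, f n = y & walk X Y f n].

Lemma altS X Y i : alt X Y i.+1 = alt Y X i.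
Proof. by rewrite /alt /=; case: odd. Qed.

Lemma alt_oddD X Y a i : ~~ odd a -> alt X Y (a + i) = alt X Y i.
Proof. by move=> ea; rewrite /alt oddD (negbTE ea). Qed.

Lemma chain0 X Y x y : chain X Y 0 x y <-> x = y.
Proof.
split=> [[f [<- <- _]] // | ->].
by exists (fun=> y); split.
Qed.

Lemma chainS X Y n x z :
  chain X Y n.+1 x z <-> exists y, X x y /\ chain Y X n y z.
Proof.
split=> [[f [f0 fn fw]] | [y [xy [f [f0 fn fw]]]]].
  exists (f 1); split; first by rewrite -f0; exact: (fw 0).
  by exists (fun i => f i.+1); split=> // i lti; rewrite -altS; apply: fw.
exists (fun i => if i is j.+1 then f j else x); split=> // -[|i] lti /=.
  by rewrite f0.
by rewrite altS; apply: fw.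
Qed.

Lemma chainSr X Y n x z :
  chain X Y n.+1 x z <-> exists y, chain X Y n x y /\ alt X Y n y z.
Proof.
split=> [[f [f0 fn fw]] | [y [[f [f0 fn fw]] yz]]].
  exists (f n); split; last by rewrite -fn; apply: fw.
  by exists f; split=> // i lti; apply: fw; lia.
exists (fun i => if i <= n then f i else z); split; rewrite ?leq0n ?ltnn //.
move=> i; rewrite ltnS => le_in; rewrite le_in.
case: (ltnP i n) => [lt_in | le_ni]; first exact: fw.
have -> : i = n by lia.
by rewrite -fn in yz.
Qed.

Lemma altcompE X Y n x y : altcomp X Y n x y <-> chain X Y n x y.
Proof.
case: n X Y x y => [|n] X Y x y; first by rewrite chain0.
elim: n X Y x y => [|n IH] X Y x y.
  rewrite chainS; split=> [xy | [_ [xy /chain0 <-]]] //.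
  by exists y; rewrite chain0.
rewrite chainS; split=> -[u [xu H]]; exists u; split=> //; exact/IH.
Qed.

Lemma chain_rcons X Y n x y z :
  chain X Y n x y -> alt X Y n y z -> chain X Y n.+1 x z.
Proof. by move=> xy yz; apply/chainSr; exists y. Qed.

Lemma chain_cat X Y a b x y z : ~~ odd a ->
  chain X Y a x y -> chain X Y b y z -> chain X Y (a + b) x z.
Proof.
move=> ea xy; elim: b z => [|b IH] z; first by move/chain0 <-; rewrite addn0.
case/chainSr=> u [yu uz]; rewrite addnS.
by apply: chain_rcons (IH _ yu) _; rewrite alt_oddD.
Qed.

Lemma alt_sym X Y i : Symmetric X -> Symmetric Y -> Symmetric (alt X Y i).
Proof. by rewrite /alt; case: odd. Qed.

Lemma alt_refl X Y i : Reflexive X -> Reflexive Y -> Reflexive (alt X Y i).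
Proof. by rewrite /alt; case: odd. Qed.

Lemma walk_chain X Y f n a l : ~~ odd a -> a + l <= n -> walk X Y f n ->
  chain X Y l (f a) (f (a + l)).
Proof.
move=> ea le_aln fw; exists (fun i => f (a + i)); split; rewrite ?addn0 //.
by move=> i lti; rewrite -(alt_oddD _ _ _ ea) addnS; apply: fw; lia.
Qed.

(* Read backwards from an odd position, a walk again starts with an X-step. *)
Lemma walk_chain_rev X Y f n b l : Symmetric X -> Symmetric Y ->
  odd b -> l <= b <= n -> walk X Y f n -> chain X Y l (f b) (f (b - l)).
Proof.
move=> sX sY ob /andP[le_lb le_bn] fw; exists (fun i => f (b - i)); split; rewrite ?subn0 //.
move=> i lti; have e : b - i = (b - i.+1).+1 by lia.
have -> : alt X Y i = alt X Y (b - i.+1).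
  by rewrite /alt oddB ?ob /=; [case: odd | lia].
by rewrite e; apply: alt_sym => //; apply: fw; lia.
Qed.

Lemma chain_join X Y l u v w : Symmetric X -> Transitive X -> Symmetric Y -> Transitive Y ->
  chain X Y l.+1 u w -> chain X Y l.+1 v w -> chain X Y (2 * l + 1) u v.
Proof.
elim: l X Y u v => [|l IH] X Y u v sX tX sY tY.
  move=> /chainS[u' [uu' /chain0 eu]] /chainS[v' [vv' /chain0 ev]]; subst u' v'.
  by apply/chainS; exists v; split; [apply: tX uu' (sX _ _ vv') | exact/chain0].
move=> /chainS[u' [uu' u'w]] /chainS[v' [vv' v'w]].
have -> : 2 * l.+1 + 1 = (2 * l + 1).+2 by lia.
apply/chainS; exists u'; split=> //.
apply: chain_rcons (IH _ _ _ _ _ _ _ _ u'w v'w) _ => //.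
by rewrite /alt oddD oddM /=; apply: sX.
Qed.

Lemma chain_absorb X Y K x u w : Transitive Y -> 0 < K ->
  chain X Y (2 * K) x u -> Y u w -> chain X Y (2 * K) x w.
Proof.
move=> tY K_gt0; have -> : 2 * K = (2 * K).-1.+1 by lia.
case/chainSr=> m [xm mu] uw; apply: chain_rcons xm _.
have oK : odd (2 * K).-1 by rewrite -subn1 oddB ?oddM //; lia.
by move: mu; rewrite /alt oK => mu; apply: tY mu uw.
Qed.

Lemma chain_expand P X Y K r x y : Transitive Y -> 0 < K ->
  (forall u v, P u v -> chain X Y (2 * K) u v) ->
  chain P Y (2 * r) x y -> chain X Y (2 * (r * K)) x y.
Proof.
move=> tY K_gt0 PX; elim: r x => [|r IH] x.
  by rewrite mul0n muln0 => /chain0 ->; exact/chain0.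
have -> : 2 * r.+1 = (2 * r).+2 by lia.
case/chainS=> u [xu /chainS[w [uw wy]]].
rewrite [r.+1 * K]mulSn mulnDr; apply: chain_cat; first by rewrite oddM.
  exact: chain_absorb (PX _ _ xu) uw.
exact: IH.
Qed.

(* Cut a walk of length 4l+3 into four pieces of length l+1 (two of them read
   backwards and padded by a reflexive step) around its middle Y-step. *)
Lemma chain_quarters X Y l x y : Equivalence X -> Equivalence Y ->
  chain X Y (4 * l + 3) x y -> exists e z w e',
  [/\ chain X Y l.+1 x e, chain X Y l.+1 z e, Y z w,
      chain X Y l.+1 w e' & chain X Y l.+1 y e'].
Proof.
move=> eX eY [f [<- <- fw]].
have pad b a : odd b -> l <= b <= 4 * l + 3 -> a = b - l ->
    chain X Y l.+1 (f b) (f a).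
  move=> ob le_b ->; apply: chain_rcons (walk_chain_rev _ _ ob le_b fw) _.
  exact: alt_refl.
exists (f l.+1), (f (2 * l + 1)), (f (2 * l + 2)), (f (3 * l + 3)); split.
- by have := walk_chain (a := 0) (l := l.+1) isT _ fw; apply; lia.
- by apply: (pad (2 * l + 1)); [rewrite oddD oddM | lia | lia].
- by have := fw (2 * l + 1); rewrite /alt oddD oddM addn1 -[(2 * l).+2]addn2; apply; lia.
- have := walk_chain (a := 2 * l + 2) (l := l.+1) _ _ fw; rewrite oddD oddM.
  have -> : 2 * l + 2 + l.+1 = 3 * l + 3 by lia.
  by apply; lia.
- by apply: (pad (4 * l + 3)); [rewrite oddD oddM | lia | lia].
Qed.

End Chains.

Lemma chain_map (T U : Type) (g : T -> U) (X Y : relation T) (X' Y' : relation U) n x y :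
  (forall u v, X u v -> X' (g u) (g v)) -> (forall u v, Y u v -> Y' (g u) (g v)) ->
  chain X Y n x y -> chain X' Y' n (g x) (g y).
Proof.
move=> gX gY [f [<- <- fw]]; exists (g \o f); split=> // i lti.
by move: (fw i lti); rewrite /alt /=; case: odd; [apply: gY | apply: gX].
Qed.

Section Congruences.
Variables (S : signature) (A : algebra S).
Implicit Types R X Y : relation A.

Definition compatible R : Prop :=
  forall (f : opsym S) (a b : 'I_(arity f) -> A),
    (forall i, R (a i) (b i)) -> R (@op S A f a) (@op S A f b).

Lemma congruence_compatible R : is_congruence R -> compatible R.
Proof. by case. Qed.

Lemma congruence_equivalence R : is_congruence R -> Equivalence R.
Proof. by case=> reflR symR transR _; split. Qed.

Lemma congruence_meet X Y :
  is_congruence X -> is_congruence Y -> is_congruence (rmeet X Y).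
Proof.
case=> rX sX tX cX [rY sY tY cY].
split=> [u | u v [] | u v w [] ? ? [] | f a b ab]; split; eauto.
- by apply: cX => i; case: (ab i).
- by apply: cY => i; case: (ab i).
Qed.

Lemma rcomp_compatible X Y : compatible X -> compatible Y -> compatible (rcomp X Y).
Proof.
move=> cX cY f a b /functional_choice[c ac].
by exists (@op S A f c); split; [apply: cX | apply: cY] => i; case: (ac i).
Qed.

Lemma altcomp_compatible X Y n :
  compatible X -> compatible Y -> compatible (altcomp X Y n.+1).
Proof.
elim: n X Y => [|n IH] X Y cX cY //=.
by apply: rcomp_compatible => //; apply: IH.
Qed.

End Congruences.

Definition homomorphism (S : signature) (B A : algebra S) (h : B -> A) : Prop :=
  forall (f : opsym S) (a : 'I_(arity f) -> B), h (@op S B f a) = @op S A f (fun i => h (a i)).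

Section Homomorphisms.
Variables (S : signature) (B A : algebra S) (h : B -> A).
Hypothesis hom_h : homomorphism h.

Lemma eval_hom (v : nat -> B) (t : term S) : h (eval v t) = eval (fun n => h (v n)) t.
Proof.
elim: t => [n | f ts IH] //=; rewrite hom_h.
by congr (@op S A f); apply: functional_extensionality.
Qed.

Lemma congruence_preimage (R : relation A) :
  is_congruence R -> is_congruence (fun p q => R (h p) (h q)).
Proof.
case=> rR sR tR cR; split=> [p | p q | p q s | f a b ab]; eauto.
by rewrite !hom_h; apply: cR.
Qed.

Lemma congruence_kernel : is_congruence (fun p q => h p = h q).
Proof.
split=> [p | p q | p q s | f a b ab]; try congruence.
by rewrite !hom_h; congr (@op S A f); apply: functional_extensionality.
Qed.

End Homomorphisms.

Section PairAlgebra.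
Variables (S : signature) (A : algebra S) (R : relation A).
Hypothesis compatR : compatible R.

Definition pair_carrier := {p : A * A | R p.1 p.2}.

Definition pair_op (f : opsym S) (ps : 'I_(arity f) -> pair_carrier) : pair_carrier :=
  exist _ (@op S A f (fun i => (sval (ps i)).1), @op S A f (fun i => (sval (ps i)).2))
    (compatR (fun i => svalP (ps i))).

Definition pair_alg : algebra S := Algebra pair_op.

Definition pfst (p : pair_alg) : A := (sval p).1.
Definition psnd (p : pair_alg) : A := (sval p).2.

Lemma pfst_hom : homomorphism pfst. Proof. by []. Qed.
Lemma psnd_hom : homomorphism psnd. Proof. by []. Qed.

Lemma pair_alg_eq (p q : pair_alg) : pfst p = pfst q -> psnd p = psnd q -> p = q.
Proof.
case: p q => [[p1 p2] Rp] [[q1 q2] Rq]; rewrite /pfst /psnd /= => e1 e2.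
by subst q1 q2; congr exist; apply: proof_irrelevance.
Qed.

Lemma pair_alg_in_variety (Sigma : identity S -> Prop) :
  in_variety Sigma A -> in_variety Sigma pair_alg.
Proof.
move=> HA e Se v; apply: pair_alg_eq.
- by rewrite !(eval_hom pfst_hom); apply: HA.
- by rewrite !(eval_hom psnd_hom); apply: HA.
Qed.

End PairAlgebra.

Section Ascent.
Variables (S : signature) (Sigma : identity S -> Prop) (r : nat).
Hypothesis mod3 : mk_modular Sigma 3 (2 * r).
Variables (A : algebra S) (alpha beta gamma : relation A).
Hypotheses (HA : in_variety Sigma A) (con_alpha : is_congruence alpha)
  (con_beta : is_congruence beta) (con_gamma : is_congruence gamma).

Let ag := rmeet alpha gamma.

Lemma pair_alg_chain (R : relation A) x y z w e e' : compatible R ->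
  alpha x y -> R x e -> R z e -> ag z w -> R w e' -> R y e' ->
  chain (fun u v => alpha u v /\ exists b, R u b /\ R v b) ag (2 * r) x y.
Proof.
move=> compatR axy Rxe Rze [azw gzw] Rwe' Rye'.
pose B := pair_alg compatR.
pose pt u v (Ruv : R u v) : B := exist _ (u, v) Ruv.
pose fst_rel (X : relation A) : relation B := fun p q => X (pfst p) (pfst q).
pose snd_ker : relation B := fun p q => psnd p = psnd q.
have : altcomp (rmeet (fst_rel alpha) snd_ker) (rmeet (fst_rel alpha) (fst_rel gamma))
         (2 * r) (pt _ _ Rxe) (pt _ _ Rye').
  apply: (mod3 (pair_alg_in_variety (compatR := compatR) HA)).
  - exact (congruence_preimage (@pfst_hom _ _ _ compatR) con_alpha).
  - exact (congruence_kernel (@psnd_hom _ _ _ compatR)).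
  - exact (congruence_preimage (@pfst_hom _ _ _ compatR) con_gamma).
  split=> //; exists (pt _ _ Rze); split=> //.
  by exists (pt _ _ Rwe'); split.
move/altcompE/(chain_map (g := @pfst _ _ _ compatR)); apply.
  move=> [[u b] Rub] [[v c] Rvc] [/= auv ebc].
  by split=> //; exists b; split=> //; rewrite /snd_ker /psnd /= in ebc; rewrite ebc.
by move=> p q [].
Qed.

Lemma modular_ascent q x y : 0 < r -> alpha x y ->
  chain beta ag (2 ^ q.+1 - 1) x y -> chain (rmeet alpha beta) ag (2 * r ^ q) x y.
Proof.
move=> r_gt0; have eq_beta := congruence_equivalence con_beta.
have eq_ag := congruence_equivalence (congruence_meet con_alpha con_gamma).
have [refl_b sym_b trans_b] := eq_beta; have [refl_ag sym_ag trans_ag] := eq_ag.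
elim: q x y => [|q IH] x y axy.
  rewrite expn0 muln1 => /chainS[u [bxu /chain0 uy]]; subst u.
  apply/chainS; exists y; split=> //.
  by apply/chainS; exists y; split; [apply: refl_ag | apply/chain0].
have [l El] : exists l, 2 ^ q = l.+1 by exists (2 ^ q).-1; rewrite prednK // expn_gt0.
have -> : 2 ^ q.+2 - 1 = 4 * l + 3 by rewrite !expnS El; lia.
have e_odd : 2 ^ q.+1 - 1 = 2 * l + 1 by rewrite expnS El; lia.
rewrite e_odd in IH.
case/(chain_quarters eq_beta eq_ag)=> e [z [w [e' [xe ze zw we' ye']]]].
have compatT : compatible (altcomp beta ag l.+1).
  by apply: altcomp_compatible; apply: congruence_compatible => //; apply: congruence_meet.
move: xe ze we' ye' => /altcompE xe /altcompE ze /altcompE we' /altcompE ye'.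
have := pair_alg_chain compatT axy xe ze zw we' ye'.
rewrite expnS; apply: chain_expand => //; first by rewrite expn_gt0 r_gt0.
move=> u v [auv [b [/altcompE ub /altcompE vb]]]; apply: IH => //.
exact: chain_join ub vb.
Qed.

End Ascent.

Theorem theorem3p3 (S : signature) (Sigma : identity S -> Prop) (r q : nat) :
  0 < r -> 0 < q ->
  mk_modular Sigma 3 (2 * r) ->
  mk_modular Sigma (2 ^ q.+1 - 1) (2 * r ^ q).
Proof.
move=> r_gt0 _ mod3 A HA alpha beta gamma con_alpha con_beta con_gamma x y [axy].
move/altcompE/(modular_ascent mod3 HA con_alpha con_beta con_gamma r_gt0 axy).
by move/altcompE.
Qed.
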